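(* Suppose $w\in\mathbb{Z}^A$ induces the triangulation $Z$. Then there is a constant $a>0$, independent of $\delta$, such that for all sufficiently small $\delta>0$ and every $x\in P_\Sigma$, the set $S_x=\{m\in A:\rho_m(x)>\delta^a\}$ is the vertex set of a simplex (of some dimension $0,1$ or $2$) of $Z$.
   Context: Let $M\cong\mathbb{Z}^2$, $\Delta\subset M_{\mathbb{R}}$ a 2-dimensional lattice polygon, $A=\Delta\cap M$, $P_\Sigma$ the projective toric surface of the normal fan of $\Delta$ with torus $(\mathbb{C}^* )^2$, $s_m(x)=x^m$ for $m\in A$. For $w\in\mathbb{Z}^A$, $\delta\in(0,1)$: $\rho_m=\delta^{2w_m}|s_m|^2/\sum_{m'\in A}\delta^{2w_{m'}}|s_{m'}|^2$ (extended continuously to $P_\Sigma$). We say $w$ induces the triangulation $Z$ if $Z$ is a triangulation of $\Delta$ whose vertex set is all of $A$, each triangle of $Z$ containing no lattice points other than its vertices, such that for every simplex $\sigma$ of $Z$ there is an affine function $\ell_\sigma:M_{\mathbb{R}}\to\mathbb{R}$ with $w_m=\ell_\sigma(m)$ for vertices $m$ of $\sigma$ and $w_m>\ell_\sigma(m)$ for all other $m\in A$ (i.e. $Z$ is the strictly convex regular triangulation given by the lower convex hull of $\{(m,w_m)\}$). Simplices of $Z$ are identified with their vertex sets $S\subset A$; we write $S\in Z$. *)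

From HB Require Import structures.
From mathcomp Require Import all_boot all_order all_algebra.
From mathcomp Require Import finmap.
From mathcomp Require Import all_classical all_reals all_analysis.
From mathcomp Require complex.
Set Implicit Arguments. Unset Strict Implicit. Unset Printing Implicit Defensive.
Import Order.TTheory GRing.Theory Num.Theory.
Local Open Scope ring_scope.

Notation lpt := (int * int)%type.

Section Defs.
Variable R : realType.

Definition rx (m : lpt) : R := (m.1)%:~R.
Definition ry (m : lpt) : R := (m.2)%:~R.

Definition in_conv (S : {fset lpt}) (px py : R) : Prop :=
  exists lam : lpt -> R,
    (forall v, v \in S -> 0 <= lam v) /\
    \sum_(v <- S) lam v = 1 /\
    \sum_(v <- S) lam v * rx v = px /\
    \sum_(v <- S) lam v * ry v = py.

Definition aff_indep (S : {fset lpt}) : Prop :=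
  forall lam : lpt -> R,
    \sum_(v <- S) lam v = 0 ->
    \sum_(v <- S) lam v * rx v = 0 ->
    \sum_(v <- S) lam v * ry v = 0 ->
    forall v, v \in S -> lam v = 0.

(* Delta = conv V is a 2-dimensional lattice polygon (V a finite set of
   lattice points not all on a line) and A = Delta \cap M. *)
Definition lattice_polygon_points (V A : {fset lpt}) : Prop :=
  (exists u v t, [/\ u \in V, v \in V, t \in V & aff_indep [fset u; v; t]%fset]) /\
  (forall m : lpt, m \in A <-> in_conv V (rx m) (ry m)).

(* Z (a finite set of simplices, identified with their vertex sets) is a
   triangulation of Delta = conv V. *)
Definition triangulation (V : {fset lpt}) (Z : {fset {fset lpt}}) : Prop :=
  [/\
      (forall S, S \in Z -> S != fset0 /\ aff_indep S),
      (forall S T, S \in Z -> (T `<=` S)%fset -> T != fset0 -> T \in Z),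
      (forall S T, S \in Z -> T \in Z -> forall px py,
          (in_conv S px py /\ in_conv T px py) <-> in_conv (S `&` T)%fset px py)
    &
      (forall px py, in_conv V px py <-> exists2 S, S \in Z & in_conv S px py)].

(* "w induces the triangulation Z" (w : Z^A, only its values on A matter) *)
Definition induces (V A : {fset lpt}) (w : lpt -> int) (Z : {fset {fset lpt}})
  : Prop :=
  [/\ triangulation V Z,
      (forall S, S \in Z -> (S `<=` A)%fset),
      (forall m, m \in A -> [fset m]%fset \in Z),
      (forall S, S \in Z -> (#|` S| = 3)%N ->
         forall m : lpt, in_conv S (rx m) (ry m) -> m \in S)
    & (* regularity / strict convexity w.r.t. the heights w *)
      (forall S, S \in Z -> exists c0 c1 c2 : R, forall m, m \in A ->
         (m \in S -> (w m)%:~R = c0 + c1 * rx m + c2 * ry m) /\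
         (m \notin S -> (w m)%:~R > c0 + c1 * rx m + c2 * ry m))].

Definition sqabs (z : complex.complex R) : R :=
  (complex.Re z) ^+ 2 + (complex.Im z) ^+ 2.

(* |s_m(x)|^2 = |x1|^(2 m1) |x2|^(2 m2) for x = (x1,x2) in the torus (C^* )^2 *)
Definition abs2_char (x : complex.complex R * complex.complex R) (m : lpt) : R :=
  (sqabs x.1) ^ m.1 * (sqabs x.2) ^ m.2.

Definition rho (A : {fset lpt}) (w : lpt -> int) (delta : R)
    (x : complex.complex R * complex.complex R) (m : lpt) : R :=
  delta ^ (2 * w m) * abs2_char x m /
  \sum_(m' <- A) delta ^ (2 * w m') * abs2_char x m'.

Definition in_torus (x : complex.complex R * complex.complex R) : Prop :=
  x.1 <> complex.Complex 0 0 /\ x.2 <> complex.Complex 0 0.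

(* p : A -> R is the value (rho_m(y))_{m in A} of the continuous extension of
   rho at some point y of P_Sigma.  Since P_Sigma is compact and the torus is
   dense in it, the set of such values is exactly the closure (in R^A) of
   {(rho_m(x))_m : x in (C^* )^2}. *)
Definition rho_value_on_PSigma (A : {fset lpt}) (w : lpt -> int) (delta : R)
    (p : lpt -> R) : Prop :=
  forall eps : R, 0 < eps -> exists x, in_torus x /\
    forall m, m \in A -> `| rho A w delta x m - p m | < eps.

Definition Sset (A : {fset lpt}) (p : lpt -> R) (delta a : R) : {fset lpt} :=
  [fset m in A | (delta `^ a < p m)%R]%fset.

End Defs.

(* For x in the torus, delta^(2 w_m) |s_m(x)|^2 = delta^(2 h(m)), where
   h(m) = w_m + al m_1 + be m_2 tilts the heights by a linear function depending
   on x (al, be are ln|x_i|^2 / (2 ln delta)).  As delta < 1, rho_m(x) > delta^a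
   forces h(m) < min_A h + a, and the minimiser of h has rho >= 1/|A| > delta^a.
   Points of P_Sigma are limits of torus points, which costs an error delta^a/2.
   Strict regularity of w gives a uniform gap gam > 0: every simplex T of Z has
   an affine function agreeing with w on T and at least gam below w on A \ T.
   If h < min h + gam/|S| on S, the barycenter of S lies in some simplex T; the
   affine function of T, tilted like h, is >= min h at the barycenter, so its
   average over S is too, while every m in S outside T lowers that average by
   gam/|S|.  Hence S is a face of T, and a = gam/|A| works. *)

From HB Require Import structures.
From mathcomp Require Import all_boot all_order all_algebra.
From mathcomp Require Import finmap.
From mathcomp Require Import all_classical all_reals all_analysis.
From mathcomp Require complex.
From mathcomp Require Import ring lra.
Set Implicit Arguments. Unset Strict Implicit. Unset Printing Implicit Defensive.
Import Order.TTheory GRing.Theory Num.Theory.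
Local Open Scope ring_scope.

Section ConvexHull.
Variable R : realType.
Implicit Types (S V : {fset lpt}).

Lemma sumr_const_fset S (c : R) : \sum_(m <- S) c = c * #|` S|%:R.
Proof.
by rewrite big_const_seq (count_predT (S : seq lpt)) iter_addr_0 mulr_natr.
Qed.

Lemma in_conv_vertex S v : v \in S -> in_conv S (rx R v) (ry R v).
Proof.
move=> vS; have pick (f : lpt -> R) : \sum_(u <- S) (u == v)%:R * f u = f v.
  rewrite (bigD1_seq v) //= eqxx mul1r big1 ?addr0 // => u /negPf ->.
  by rewrite mul0r.
exists (fun u => (u == v)%:R); split; first by move=> u _; rewrite ler0n.
by rewrite !pick -[RHS](pick (fun=> 1)); under [RHS]eq_bigr do rewrite mulr1.
Qed.

Lemma in_conv_affine_ge S (px py c0 c1 c2 h : R) :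
  in_conv S px py ->
  (forall v, v \in S -> h <= c0 + c1 * rx R v + c2 * ry R v) ->
  h <= c0 + c1 * px + c2 * py.
Proof.
move=> [lam [lam0 [lam1 [lamx lamy]]]] hS.
have -> : c0 + c1 * px + c2 * py =
    \sum_(v <- S) lam v * (c0 + c1 * rx R v + c2 * ry R v).
  rewrite (eq_bigr (fun v => c0 * lam v + c1 * (lam v * rx R v)
                             + c2 * (lam v * ry R v))); last by move=> *; ring.
  by rewrite !big_split -!mulr_sumr /= lam1 lamx lamy mulr1.
rewrite -[h]mul1r -lam1 mulr_suml big_seq [leRHS]big_seq.
by apply: ler_sum => v vS; rewrite ler_wpM2l ?lam0 ?hS.
Qed.

Lemma in_conv_barycenter V S : S != fset0 ->
  (forall m, m \in S -> in_conv V (rx R m) (ry R m)) ->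
  in_conv V ((\sum_(m <- S) rx R m) / #|` S|%:R)
            ((\sum_(m <- S) ry R m) / #|` S|%:R).
Proof.
move=> Sne hS; set k : R := #|` S|%:R.
have k0 : k != 0 by rewrite pnatr_eq0 -lt0n cardfs_gt0.
have /boolp.choice [lam hlam] : forall m, exists lam : lpt -> R, m \in S ->
    [/\ forall v, v \in V -> 0 <= lam v, \sum_(v <- V) lam v = 1,
        \sum_(v <- V) lam v * rx R v = rx R m
      & \sum_(v <- V) lam v * ry R v = ry R m].
  move=> m; case: (boolP (m \in S)) => [/hS [l [? [? [? ?]]]]|_].
    by exists l.
  by exists (fun=> 0).
exists (fun v => (\sum_(m <- S) lam m v) / k); split; [|split; [|split]].
- move=> v vV; rewrite divr_ge0 ?ler0n // big_seq sumr_ge0 // => m mS.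
  by case: (hlam m mS) => + _ _ _; apply.
- rewrite -mulr_suml exchange_big /= big_seq (eq_bigr (fun=> 1)).
    by rewrite -big_seq sumr_const_fset mul1r mulfV.
  by move=> m mS; case: (hlam m mS).
- under eq_bigr do rewrite mulrAC mulr_suml.
  rewrite -mulr_suml exchange_big /= big_seq [in RHS]big_seq.
  by congr (_ / _); apply: eq_bigr => m mS; case: (hlam m mS).
- under eq_bigr do rewrite mulrAC mulr_suml.
  rewrite -mulr_suml exchange_big /= big_seq [in RHS]big_seq.
  by congr (_ / _); apply: eq_bigr => m mS; case: (hlam m mS).
Qed.

End ConvexHull.

Lemma exists_pos_uniform (R : realDomainType) (T : eqType) (s : seq T)
    (P : T -> R -> Prop) :
  (forall x g g', 0 < g' <= g -> P x g -> P x g') ->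
  (forall x, x \in s -> exists2 g, 0 < g & P x g) ->
  exists2 g, 0 < g & forall x, x \in s -> P x g.
Proof.
move=> Pmono; elim: s => [|y s IHs] hs; first by exists 1.
have [g1 g1_gt0 Pg1] := hs y (mem_head _ _).
have [g2 g2_gt0 Pg2] : exists2 g, 0 < g & forall x, x \in s -> P x g.
  by apply: IHs => x xs; apply: hs; rewrite inE xs orbT.
have g_gt0 : 0 < Num.min g1 g2 by rewrite lt_min g1_gt0.
exists (Num.min g1 g2) => // x; rewrite inE => /predU1P[->|/Pg2].
  by apply: (Pmono _ g1) => //; rewrite g_gt0 ge_min lexx.
by apply: (Pmono _ g2) => //; rewrite g_gt0 ge_min lexx orbT.
Qed.

Lemma exists_argmin (R : realDomainType) (T : eqType) (s : seq T) (f : T -> R) :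
  s != [::] -> exists2 m0, m0 \in s & forall m, m \in s -> f m0 <= f m.
Proof.
elim: s => [//|y [|z s] IHs] _.
  by exists y; rewrite ?mem_head // => m; rewrite inE => /eqP ->.
have [m1 m1s hm1] := IHs isT.
have [fy_le|fm1_lt] := lerP (f y) (f m1).
  exists y; first exact: mem_head.
  by move=> m; rewrite inE => /predU1P[->//|/hm1]; apply: le_trans.
exists m1; first by rewrite inE m1s orbT.
by move=> m; rewrite inE => /predU1P[->|/hm1//]; apply: ltW.
Qed.

Section Triangulation.
Variables (R : realType) (V A : {fset lpt}) (w : lpt -> int).
Variable Z : {fset {fset lpt}}.

Definition tilted (al be : R) (m : lpt) : R :=
  (w m)%:~R + al * rx R m + be * ry R m.

Definition supporting_plane (gam c0 c1 c2 : R) (S : {fset lpt}) : Prop :=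
  forall m, m \in A ->
    (m \in S -> (w m)%:~R = c0 + c1 * rx R m + c2 * ry R m) /\
    (m \notin S -> c0 + c1 * rx R m + c2 * ry R m + gam <= (w m)%:~R).

Lemma uniform_height_gap :
  (forall S, S \in Z -> exists c0 c1 c2 : R, forall m, m \in A ->
     (m \in S -> (w m)%:~R = c0 + c1 * rx R m + c2 * ry R m) /\
     (m \notin S -> (w m)%:~R > c0 + c1 * rx R m + c2 * ry R m)) ->
  exists2 gam : R, 0 < gam &
    forall S, S \in Z -> exists c0 c1 c2, supporting_plane gam c0 c1 c2 S.
Proof.
have gap_mono c0 c1 c2 S g g' : 0 < g' <= g ->
    supporting_plane g c0 c1 c2 S -> supporting_plane g' c0 c1 c2 S.
  move=> /andP[_ g'g] hg m mA; have [eqS ltS] := hg m mA.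
  by split=> // /ltS; apply: le_trans; rewrite lerD2l.
move=> hreg; apply: exists_pos_uniform => [S g g' g'g [c0 [c1 [c2 hg]]]|S SZ].
  by exists c0, c1, c2; apply: gap_mono hg.
have [c0 [c1 [c2 hS]]] := hreg S SZ.
have [g g_gt0 hg] : exists2 g : R, 0 < g & forall m, m \in A ->
    m \notin S -> c0 + c1 * rx R m + c2 * ry R m + g <= (w m)%:~R.
  apply: exists_pos_uniform => [m g g' /andP[_ g'g] hg /hg|m mA].
    by apply: le_trans; rewrite lerD2l.
  have [mS|mS] := boolP (m \in S); first by exists 1.
  exists ((w m)%:~R - (c0 + c1 * rx R m + c2 * ry R m)).
    by rewrite subr_gt0; apply: (hS m mA).2.
  by rewrite addrC subrK.
exists g => //; exists c0, c1, c2 => m mA.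
by split; [exact: (hS m mA).1 | exact: hg].
Qed.

Hypothesis A_in_conv : forall m, m \in A -> in_conv V (rx R m) (ry R m).
Hypothesis Z_cover : forall px py : R,
  in_conv V px py -> exists2 S, S \in Z & in_conv S px py.
Hypothesis Z_sub : forall S, S \in Z -> (S `<=` A)%fset.
Hypothesis Z_face : forall S T,
  S \in Z -> (T `<=` S)%fset -> T != fset0 -> T \in Z.
Variable gam : R.
Hypothesis gam_gt0 : 0 < gam.
Hypothesis Z_gap : forall S, S \in Z ->
  exists c0 c1 c2, supporting_plane gam c0 c1 c2 S.

Lemma excess_sum_le (al be hmin : R) (S : {fset lpt}) :
  (S `<=` A)%fset -> S != fset0 ->
  (forall m, m \in A -> hmin <= tilted al be m) ->
  exists2 T, T \in Z & exists c0 c1 c2, supporting_plane gam c0 c1 c2 T /\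
    \sum_(m <- S) ((w m)%:~R - (c0 + c1 * rx R m + c2 * ry R m))
      <= \sum_(m <- S) tilted al be m - #|` S|%:R * hmin.
Proof.
move=> /fsubsetP SA Sne hmin_le; set k : R := #|` S|%:R.
have k0 : k != 0 by rewrite pnatr_eq0 -lt0n cardfs_gt0.
set qx := (\sum_(m <- S) rx R m) / k; set qy := (\sum_(m <- S) ry R m) / k.
have /Z_cover [T TZ qT] : in_conv V qx qy.
  by apply: in_conv_barycenter => // m /SA /A_in_conv.
have [c0 [c1 [c2 hT]]] := Z_gap TZ.
exists T => //; exists c0, c1, c2; split => //.
pose F x y := c0 + (c1 + al) * x + (c2 + be) * y.
have Fq_ge : hmin <= F qx qy.
  apply: in_conv_affine_ge qT _ => v vT.
  have vA : v \in A by apply: (fsubsetP (Z_sub TZ)).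
  rewrite [leRHS](_ : _ = tilted al be v); first exact: hmin_le.
  by rewrite /tilted (hT v vA).1 //; ring.
have sumF : \sum_(m <- S) F (rx R m) (ry R m) = k * F qx qy.
  rewrite /F /qx /qy !big_split /= -!mulr_sumr sumr_const_fset.
  by field.
rewrite [leRHS](_ : _ = \sum_(m <- S) (tilted al be m - F (rx R m) (ry R m))
    + (k * F qx qy - k * hmin)); last by rewrite sumrB sumF; ring.
rewrite -[leLHS]addr0.
apply: lerD; first by apply: ler_sum => m _; rewrite /tilted /F; lra.
by rewrite subr_ge0 ler_wpM2l ?ler0n.
Qed.

Lemma near_minimizers_in_Z (al be hmin : R) (S : {fset lpt}) :
  (S `<=` A)%fset -> S != fset0 ->
  (forall m, m \in A -> hmin <= tilted al be m) ->
  (forall m, m \in S -> tilted al be m < hmin + gam / #|` S|%:R) ->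
  S \in Z.
Proof.
move=> SA Sne hmin_le hnear; set k : R := #|` S|%:R.
have k0 : 0 < k by rewrite ltr0n cardfs_gt0.
have [T TZ [c0 [c1 [c2 [hT hsum]]]]] := excess_sum_le SA Sne hmin_le.
pose e m := (w m)%:~R - (c0 + c1 * rx R m + c2 * ry R m).
have e_ge0 m : m \in S -> 0 <= e m.
  move=> /(fsubsetP SA) mA; have [eqT leT] := hT m mA; rewrite /e.
  case: (boolP (m \in T)) => [/eqT ->|/leT h]; first by rewrite subrr.
  by rewrite subr_ge0 (le_trans _ h) // lerDl ltW.
have sum_lt : \sum_(m <- S) e m < gam.
  apply: le_lt_trans hsum _; rewrite ltrBlDl.
  apply: (@lt_le_trans _ _ (\sum_(m <- S) (hmin + gam / k))).
    rewrite big_seq [ltRHS]big_seq ltr_sum //.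
    by case/fset0Pn: Sne => m mS; apply/hasP; exists m.
  by rewrite sumr_const_fset -/k mulrDl mulfVK ?gt_eqF // mulrC.
apply: Z_face TZ _ Sne; apply/fsubsetP => m mS; apply/negPn/negP => mT.
have : gam <= e m by rewrite /e; have := (hT m (fsubsetP SA m mS)).2 mT; lra.
apply/negP; rewrite -ltNge (le_lt_trans _ sum_lt) // (bigD1_seq m) //= lerDl.
by rewrite big_seq_cond sumr_ge0 // => i /andP[/e_ge0].
Qed.

End Triangulation.

Section TorusWeights.
Variable R : realType.

Lemma sqabs_gt0 (z : complex.complex R) :
  z <> complex.Complex 0 0 -> 0 < sqabs z.
Proof.
case: z => r i /= z0; rewrite /sqabs /= lt_def paddr_eq0 ?sqr_ge0 //.
rewrite !sqrf_eq0 addr_ge0 ?sqr_ge0 // andbT.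
by apply/negP => /andP[/eqP r0 /eqP i0]; apply: z0; rewrite r0 i0.
Qed.

Definition log_slope (d : R) (z : complex.complex R) : R :=
  ln (sqabs z) / (2 * ln d).

Definition torus_tilt (w : lpt -> int) (d : R)
    (x : complex.complex R * complex.complex R) : lpt -> R :=
  tilted w (log_slope d x.1) (log_slope d x.2).

Lemma weight_powR (w : lpt -> int) (d : R) x m :
  0 < d -> d != 1 -> in_torus x ->
  d ^ (2 * w m) * abs2_char x m = d `^ (2 * torus_tilt w d x m).
Proof.
move=> d0 d1 [/sqabs_gt0 s1 /sqabs_gt0 s2].
have ld : ln d != 0 by rewrite ln_eq0.
have lnX (y : R) (z : int) : 0 < y -> ln (y ^ z) = z%:~R * ln y.
  by move=> y0; rewrite -powR_intmul ?ltW // ln_powR.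
apply: ln_inj; rewrite ?posrE ?powR_gt0 ?mulr_gt0 ?exprz_gt0 //.
rewrite ln_powR /abs2_char !lnM ?posrE ?mulr_gt0 ?exprz_gt0 // !lnX //.
by rewrite /torus_tilt /tilted /log_slope /rx /ry intrM; field.
Qed.

Lemma lt_root_powR (a b d : R) :
  0 < a -> 0 <= b -> 0 <= d -> d < b `^ a^-1 -> d `^ a < b.
Proof.
move=> a0 b0 d0 /(gt0_ltr_powR a0 d0 (powR_ge0 _ _)).
by rewrite -powRrM mulVf ?gt_eqF // powRr1.
Qed.

Lemma approx_share_bounds (A : {fset lpt}) (c p : lpt -> R) (m0 : lpt) (T : R) :
  m0 \in A -> (forall m, m \in A -> 0 < c m <= c m0) ->
  0 < T -> 2 * #|` A|%:R * T <= 1 ->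
  (forall m, m \in A -> `|c m / \sum_(m' <- A) c m' - p m| < T / 2) ->
  T < p m0 /\ forall m, m \in A -> T < p m -> T / 2 * c m0 < c m.
Proof.
move=> m0A hc T0 TN hp; set D := \sum_(m' <- A) c m'.
have /andP[c0 _] := hc m0 m0A.
have D_ge : c m0 <= D.
  rewrite /D (bigD1_seq m0) ?fset_uniq //= lerDl big_seq_cond sumr_ge0 //.
  move=> m /andP[mA _].
  by have /andP[/ltW] := hc m mA.
have D_le : D <= #|` A|%:R * c m0.
  rewrite mulrC -sumr_const_fset /D big_seq [leRHS]big_seq ler_sum // => m mA.
  by have /andP[_] := hc m mA.
have D0 : 0 < D := lt_le_trans c0 D_ge.
split.
  have share_ge : 2 * T <= c m0 / D.
    rewrite ler_pdivlMr //.
    apply: le_trans (_ : 2 * T * (#|` A|%:R * c m0) <= _).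
      by rewrite ler_wpM2l // mulr_ge0 // ltW.
    by rewrite mulrA [X in X * _]mulrAC ger_pMl.
  by have := hp m0 m0A; rewrite ltr_norml => /andP[_ h]; lra.
move=> m mA Tp; have := hp m mA; rewrite ltr_norml => /andP[h _].
have : T / 2 < c m / D by lra.
rewrite ltr_pdivlMr //; apply: le_lt_trans.
by apply: ler_wpM2l => //; rewrite divr_ge0 // ltW.
Qed.

Lemma powR_near_min (d a x y : R) : 0 < d -> d < 1 -> d `^ a <= 2^-1 ->
  d `^ a / 2 * d `^ (2 * y) < d `^ (2 * x) -> x < y + a.
Proof.
move=> d0 d1 da lt_xy.
have ge_ya : d `^ (2 * (y + a)) <= d `^ a / 2 * d `^ (2 * y).
  rewrite mulrDr powRD ?(gt_eqF d0) ?implybT // [leRHS]mulrC.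
  apply: ler_wpM2l; first exact: powR_ge0.
  rewrite mulrC powRrM powR_mulrn ?powR_ge0 //.
  by have := powR_ge0 d a; nra.
rewrite -(ltr_pM2l (_ : 0 < 2)) // ltNge; apply/negP => le_x.
have d01 : 0 < d <= 1 by rewrite d0 ltW.
by have := lt_le_trans lt_xy (ger_powR d01 le_x); rewrite ltNge ge_ya.
Qed.

Lemma Sset_sub (A : {fset lpt}) (p : lpt -> R) (d a : R) :
  (Sset A p d a `<=` A)%fset.
Proof. by apply/fsubsetP => m; rewrite inE => /andP[]. Qed.

Lemma Sset_near_minimizers (A : {fset lpt}) (w : lpt -> int) (d a : R)
    (p : lpt -> R) :
  A != fset0 -> 0 < d -> d < 1 -> 2 * #|` A|%:R * d `^ a <= 1 ->
  rho_value_on_PSigma A w d p ->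
  exists al be : R, exists2 m0,
    forall m, m \in A -> tilted w al be m0 <= tilted w al be m &
    m0 \in Sset A p d a /\
    forall m, m \in Sset A p d a -> tilted w al be m < tilted w al be m0 + a.
Proof.
move=> A0 d0 d1 dN hp.
have [x [xT hx]] := hp _ (divr_gt0 (powR_gt0 a d0) (ltr0n _ 2)).
exists (log_slope d x.1), (log_slope d x.2).
have [m0 m0A hm0] : exists2 m0, m0 \in A & forall m, m \in A ->
    torus_tilt w d x m0 <= torus_tilt w d x m.
  by apply: exists_argmin; rewrite -size_eq0 -lt0n cardfs_gt0.
exists m0 => //.
have cE m := weight_powR w m d0 (negbT (lt_eqF d1)) xT.
have hc m : m \in A ->
    0 < d ^ (2 * w m) * abs2_char x m <= d ^ (2 * w m0) * abs2_char x m0.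
  move=> mA; rewrite !cE powR_gt0 //=; apply: ger_powR; first by rewrite d0 ltW.
  by rewrite ler_pM2l ?hm0.
have [m0S hS] := approx_share_bounds m0A hc (powR_gt0 a d0) dN hx.
split; first by rewrite !inE m0A.
move=> m; rewrite inE /= => /andP[mA /(hS m mA)].
rewrite !cE; apply: powR_near_min d0 d1 _.
have N1 : 1 <= #|` A|%:R :> R by rewrite ler1n cardfs_gt0.
by have := powR_ge0 d a; nra.
Qed.

End TorusWeights.

Theorem lemma3p4 (R : realType) (V A : {fset lpt}) (w : lpt -> int)
    (Z : {fset {fset lpt}}) :
  lattice_polygon_points R V A ->
  induces R V A w Z ->
  exists a : R, 0 < a /\
    exists delta0 : R, 0 < delta0 /\ delta0 <= 1 /\
      forall delta : R, 0 < delta -> delta < delta0 ->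
        forall p : lpt -> R, rho_value_on_PSigma A w delta p ->
          Sset A p delta a \in Z.
Proof.
move=> [[u [_ [_ [uV _ _ _]]]] hA] [[_ hface _ hcov] hsub _ _ hreg].
have [gam gam0 hgap] := uniform_height_gap hreg.
have A0 : A != fset0 by apply/fset0Pn; exists u; apply/hA/in_conv_vertex.
set N : R := #|` A|%:R; have N1 : 1 <= N by rewrite ler1n cardfs_gt0.
have a0 : 0 < gam / N by rewrite divr_gt0 //; lra.
have b0 : 0 < (2 * N)^-1 by rewrite invr_gt0; lra.
have root_le1 : (2 * N)^-1 `^ (gam / N)^-1 <= 1.
  rewrite -[leRHS](powRr0 (2 * N)^-1); apply: ger_powR.
    by rewrite b0 /= invf_le1; lra.
  by rewrite invr_ge0 ltW.
exists (gam / N); split => //; exists ((2 * N)^-1 `^ (gam / N)^-1).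
split; first exact: powR_gt0.
split => // d d0 d_lt p hp.
have dN : 2 * N * d `^ (gam / N) <= 1.
  have /ltW := lt_root_powR a0 (ltW b0) (ltW d0) d_lt.
  by rewrite -(ler_pM2l (_ : 0 < 2 * N)) ?mulfV ?gt_eqF //; lra.
have [al [be [m0 hm0 [m0S hS]]]] :=
  Sset_near_minimizers A0 d0 (lt_le_trans d_lt root_le1) dN hp.
have Sne : Sset A p d (gam / N) != fset0 by apply/fset0Pn; exists m0.
apply: (near_minimizers_in_Z (fun m mA => (hA m).1 mA)
  (fun px py h => (hcov px py).1 h) hsub hface gam0 hgap (Sset_sub _ _ _ _)
  Sne hm0).
move=> m /hS lt_m; apply: lt_le_trans lt_m _; rewrite lerD2l ler_pM2l //.
by rewrite lef_pV2 ?posrE ?ltr0n ?cardfs_gt0 ?ler_nat ?fsubset_leq_card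
  ?Sset_sub.
Qed.
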